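(* The two-dimensional subalgebras of ${\rm A}_2$ are exactly $\langle e_1,e_2\rangle$ and $\langle e_2,e_3\rangle$; up to automorphisms of ${\rm A}_2$ every two-dimensional subalgebra is equivalent to $\langle e_1,e_2\rangle$ or $\langle e_2,e_3\rangle$.
   Context: ${\rm A}_2$ is the complex algebra with basis $e_1,e_2,e_3$, unit $e_1$ ($e_1e_i=e_ie_1=e_i$), and $e_3e_3=e_2$; all other products of basis elements are zero. A subalgebra is a linear subspace closed under multiplication (it need not contain $e_1$). Equivalence up to automorphisms means one is mapped onto the other by an algebra automorphism. $\langle S\rangle$ denotes linear span. *)

From mathcomp Require Import all_boot all_algebra.
From mathcomp Require Import complex Rstruct.
Set Implicit Arguments.
Unset Strict Implicit.
Unset Printing Implicit Defensive.
Import GRing.Theory.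
Local Open Scope ring_scope.

Definition CC : fieldType := complex Rdefinitions.R.

(* Underlying vector space of A_2: C^3, coordinates w.r.t. e_1, e_2, e_3
   (indices 0, 1, 2). *)
Definition A2 := 'rV[CC]_3.

Definition i1 : 'I_3 := @Ordinal 3 0 isT.
Definition i2 : 'I_3 := @Ordinal 3 1 isT.
Definition i3 : 'I_3 := @Ordinal 3 2 isT.

Definition e1 : A2 := delta_mx 0 i1.
Definition e2 : A2 := delta_mx 0 i2.
Definition e3 : A2 := delta_mx 0 i3.

Definition basis_e (i : 'I_3) : A2 :=
  if i == i1 then e1 else if i == i2 then e2 else e3.

Definition table (i j : 'I_3) : A2 :=
  if i == i1 then basis_e j
  else if j == i1 then basis_e i
  else if (i == i3) && (j == i3) then e2
  else 0.

Definition mulA (u v : A2) : A2 :=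
  \sum_(i < 3) \sum_(j < 3) (u 0 i * v 0 j) *: table i j.

Definition is_subalgebra (V : {vspace A2}) : Prop :=
  forall u v, u \in V -> v \in V -> mulA u v \in V.

Definition is_automorphism (f : 'End(A2)) : Prop :=
  lker f = 0%VS /\ (forall u v, f (mulA u v) = mulA (f u) (f v)) /\ f e1 = e1.

Definition S12 : {vspace A2} := <<[:: e1; e2]>>%VS.
Definition S23 : {vspace A2} := <<[:: e2; e3]>>%VS.

(* A_2 is C[t]/(t^3) with e3 = t, e2 = t^2, and S23 is its radical.  A
   subalgebra V not contained in the radical contains some u = e1 + n with n
   nilpotent, hence contains e1 = u^3 - 3u^2 + 3u.  If moreover V is not inside
   S12, it contains a radical element with nonzero e3-coordinate, whose square
   is a nonzero multiple of e2; then V contains e1, e2, e3.  So a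
   two-dimensional subalgebra lies in S23 or in S12, and equals it by
   dimension.  Since the two subalgebras are already S12 and S23, the identity
   is the required automorphism. *)
From mathcomp Require Import all_boot all_algebra complex Rstruct ring.
Set Implicit Arguments.
Unset Strict Implicit.
Unset Printing Implicit Defensive.
Import GRing.Theory.
Local Open Scope ring_scope.

Lemma big_ord3 (M : nmodType) (F : 'I_3 -> M) :
  \sum_(i < 3) F i = F i1 + F i2 + F i3.
Proof.
by rewrite !big_ord_recr big_ord0 /= add0r; congr (F _ + F _ + F _); apply: val_inj.
Qed.

Lemma A2_decomp (u : A2) : u = u 0 i1 *: e1 + u 0 i2 *: e2 + u 0 i3 *: e3.
Proof. by rewrite [LHS]row_sum_delta big_ord3. Qed.

Lemma mulA_coord (u v : A2) :
  [/\ mulA u v 0 i1 = u 0 i1 * v 0 i1,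
      mulA u v 0 i2 = u 0 i1 * v 0 i2 + u 0 i2 * v 0 i1 + u 0 i3 * v 0 i3
    & mulA u v 0 i3 = u 0 i1 * v 0 i3 + u 0 i3 * v 0 i1].
Proof. by rewrite /mulA; split; rewrite summxE big_ord3 !summxE !big_ord3 !mxE /=; ring. Qed.

Lemma eq_A2 (u v : A2) :
  u 0 i1 = v 0 i1 -> u 0 i2 = v 0 i2 -> u 0 i3 = v 0 i3 -> u = v.
Proof. by move=> eq1 eq2 eq3; rewrite (A2_decomp u) (A2_decomp v) eq1 eq2 eq3. Qed.

Lemma memS12 (u : A2) : (u \in S12) = (u 0 i3 == 0).
Proof.
apply/idP/eqP => [|u3].
  rewrite /S12 span_cons span_seq1 => /memv_addP[_ /vlineP[a ->] [_ /vlineP[b ->] ->]].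
  by rewrite !mxE /= !mulr0 addr0.
rewrite (A2_decomp u) u3 scale0r addr0.
by apply: memvD; apply: memvZ; apply: memv_span; rewrite !inE eqxx ?orbT.
Qed.

Lemma memS23 (u : A2) : (u \in S23) = (u 0 i1 == 0).
Proof.
apply/idP/eqP => [|u1].
  rewrite /S23 span_cons span_seq1 => /memv_addP[_ /vlineP[a ->] [_ /vlineP[b ->] ->]].
  by rewrite !mxE /= !mulr0 addr0.
rewrite (A2_decomp u) -addrA u1 scale0r add0r.
by apply: memvD; apply: memvZ; apply: memv_span; rewrite !inE eqxx ?orbT.
Qed.

Lemma delta_mx_neq0 (R : nzRingType) m n (i : 'I_m) (j : 'I_n) :
  delta_mx i j != 0 :> 'M[R]_(m, n).
Proof. by apply/eqP => /matrixP/(_ i j); rewrite !mxE !eqxx; apply/eqP/oner_neq0. Qed.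

Lemma dimS12 : \dim S12 = 2%N.
Proof.
suff /eqP : free [:: e1; e2] by [].
rewrite free_cons seq1_free delta_mx_neq0 andbT span_seq1.
by apply/vlineP => -[k /rowP/(_ i1)]; rewrite !mxE /= mulr0; apply/eqP/oner_neq0.
Qed.

Lemma dimS23 : \dim S23 = 2%N.
Proof.
suff /eqP : free [:: e2; e3] by [].
rewrite free_cons seq1_free delta_mx_neq0 andbT span_seq1.
by apply/vlineP => -[k /rowP/(_ i2)]; rewrite !mxE /= mulr0; apply/eqP/oner_neq0.
Qed.

Lemma subalgebra_S12 : is_subalgebra S12.
Proof.
move=> u v; rewrite !memS12 => /eqP u3 /eqP v3.
by have [_ _ ->] := mulA_coord u v; rewrite u3 v3 mulr0 mul0r addr0.
Qed.

Lemma subalgebra_S23 : is_subalgebra S23.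
Proof.
move=> u v; rewrite !memS23 => /eqP u1 _.
by have [-> _ _] := mulA_coord u v; rewrite u1 mul0r.
Qed.

Lemma id_automorphism : is_automorphism \1%VF.
Proof.
split; first by apply/eqP/lker0P => x y; rewrite !id_lfunE.
by split=> [u v|]; rewrite !id_lfunE.
Qed.

(* [(u - e1)^3 = 0], as [u - e1] lies in the radical S23. *)
Lemma unipotent_cube (u : A2) :
  u 0 i1 = 1 -> e1 = mulA u (mulA u u) - 3%:R *: mulA u u + 3%:R *: u.
Proof.
move=> u1; have [uu1 uu2 uu3] := mulA_coord u u.
have [c1 c2 c3] := mulA_coord u (mulA u u).
by apply: eq_A2; rewrite !mxE ?c1 ?c2 ?c3 uu1 ?uu2 ?uu3 u1 /=; ring.
Qed.

Section Subalgebra.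

Variable V : {vspace A2}.
Hypothesis subV : is_subalgebra V.

Lemma e1_in_subalgebra : ~~ (V <= S23)%VS -> e1 \in V.
Proof.
case/subvPn=> w Vw; rewrite memS23 => w1.
have [u Vu u1] : exists2 u, u \in V & u 0 i1 = 1.
  by exists ((w 0 i1)^-1 *: w); rewrite ?memvZ // mxE mulVf.
by rewrite (unipotent_cube u1) memvD ?memvB ?memvZ ?subV.
Qed.

Lemma S23_subv w : w \in V -> w 0 i1 = 0 -> w 0 i3 != 0 -> (S23 <= V)%VS.
Proof.
move=> Vw w1 w3.
have w2E : mulA w w = w 0 i3 ^+ 2 *: e2.
  have [ww1 ww2 ww3] := mulA_coord w w.
  by apply: eq_A2; rewrite ?ww1 ?ww2 ?ww3 !mxE w1 /=; ring.
have Ve2 : e2 \in V.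
  by rewrite -[e2](scalerK (expf_neq0 2 w3)) -w2E memvZ ?subV.
have Ve3 : e3 \in V.
  have -> : e3 = (w 0 i3)^-1 *: (w - w 0 i2 *: e2).
    by apply: eq_A2; rewrite !mxE /= ?w1; field.
  by rewrite memvZ ?memvB ?memvZ.
by apply/span_subvP => x; rewrite !inE => /orP[] /eqP ->.
Qed.

Lemma subalgebra_fullv w : e1 \in V -> w \in V -> w 0 i3 != 0 -> V = fullv.
Proof.
move=> Ve1 Vw w3.
have sS23V : (S23 <= V)%VS.
  apply: (@S23_subv (w - w 0 i1 *: e1)); rewrite ?memvB ?memvZ //.
    by rewrite !mxE /= mulr1 subrr.
  by rewrite !mxE /= mulr0 subr0.
apply/eqP; rewrite eqEsubv subvf /=; apply/subvP => x _.
rewrite -(subrK (x 0 i1 *: e1) x) memvD ?memvZ // (subvP sS23V) // memS23.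
by rewrite !mxE /= mulr1 subrr.
Qed.

End Subalgebra.

Lemma subalgebra_dim2 (V : {vspace A2}) :
  is_subalgebra V -> \dim V = 2%N -> V = S12 \/ V = S23.
Proof.
move=> subV dimV.
have eq_dim2 W : \dim W = 2%N -> (V <= W)%VS -> V = W.
  by move=> dimW sVW; apply/eqP; rewrite eqEdim sVW dimW dimV.
have [sVS23|/(e1_in_subalgebra subV) Ve1] := boolP (V <= S23)%VS.
  by right; apply: eq_dim2 dimS23 sVS23.
have [sVS12|/subvPn[w Vw]] := boolP (V <= S12)%VS.
  by left; apply: eq_dim2 dimS12 sVS12.
rewrite memS12 => w3; have := dimvf A2.
by rewrite -(subalgebra_fullv subV Ve1 Vw w3) dimV.
Qed.

Theorem mainTheorem7 :
  (forall V : {vspace A2},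
     (is_subalgebra V /\ \dim V = 2%N) <-> (V = S12 \/ V = S23)) /\
  (forall V : {vspace A2}, is_subalgebra V -> \dim V = 2%N ->
     exists f : 'End(A2), is_automorphism f /\
       ((f @: V)%VS = S12 \/ (f @: V)%VS = S23)).
Proof.
split=> [V | V subV dimV].
  split=> [[subV dimV] | [] ->]; first exact: subalgebra_dim2.
    by split; [exact: subalgebra_S12 | exact: dimS12].
  by split; [exact: subalgebra_S23 | exact: dimS23].
exists \1%VF; split; first exact: id_automorphism.
by rewrite lim1g; apply: subalgebra_dim2.
Qed.
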